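(* Fix $b\in(0,1)$ and $0\le\rho\le1$ (with $\rho<1$), and let $\tau:=\rho(1-\rho)^{-1}(1-b)^{-1}$. Consider HL-PushTASEP on $\mathbb{Z}_{\geq 0}$ in which, in addition, particles enter the system through site $0$ at the times of an independent Poisson process of rate $\tau$ (an entering particle arrives at site $0$ and then proceeds as an activated particle under the HL-PushTASEP rules). Then the product Bernoulli measure $\nu_\rho$, under which the occupation variables $\{\eta(x)\}_{x\in\mathbb{Z}_{\geq0}}$ are independent $\mathrm{Ber}(\rho)$ random variables, is invariant for this dynamics: if the process starts from $\nu_\rho$, then at every time $t\ge0$ the occupation variables $\{\eta_t(x)\}_{x\in\mathbb{Z}_{\ge0}}$ are i.i.d. $\mathrm{Ber}(\rho)$.
   Context: HL-PushTASEP on $\mathbb{Z}_{\geq 0}$ with parameter $b\in(0,1)$: particles occupy sites of $\mathbb{Z}_{\geq 0}$, at most one per site, each with an independent rate-$1$ exponential clock. An activated particle moves one step to the right and then continues step by step with probability $b$ per further step (i.e., the particle at $x_m$ jumps $j$ steps with probability $(1-b)b^{j-1}$ for $1\leq j<x_{m+1}-x_m$); with probability $b^{x_{m+1}-x_m-1}$ it reaches the site $x_{m+1}$ of its right neighbour, stops there, and the particle previously at $x_{m+1}$ is instantaneously activated and moves by the same rule. $\eta_t(x)=1$ if site $x$ is occupied at time $t$ and $0$ otherwise. *)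

From HB Require Import structures.
From mathcomp Require Import all_boot all_order all_algebra.
From mathcomp Require Import all_classical all_reals all_analysis.
Set Implicit Arguments. Unset Strict Implicit. Unset Printing Implicit Defensive.
Import Order.TTheory GRing.Theory Num.Theory.
Local Open Scope ring_scope.

(* Configurations of the window {0,...,n-1} of Z_{>=0}. *)
Definition config (n : nat) := {ffun 'I_n -> bool}.

Definition occ n (e : config n) (q : nat) : bool :=
  [exists i : 'I_n, (nat_of_ord i == q) && e i].

Definition setb n (e : config n) (q : nat) (v : bool) : config n :=
  [ffun i : 'I_n => if nat_of_ord i == q then v else e i].

Section Dyn.
Variables (R : realType) (b : R) (n : nat).

Definition dirac (e : config n) : config n -> R := fun f => (f == e)%:R.

(* [fly k e q]: law of the resulting configuration when an activated (flying)
   particle, not counted in [e], is about to make its next step onto site q.  Step onto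
   an occupied site: stop there and the particle previously there becomes the
   flying particle.  Leaving the window: the particle exits the window.
   [k] is fuel; [k = n.+1] always suffices. *)
Fixpoint fly (k : nat) (e : config n) (q : nat) : config n -> R :=
  match k with
  | 0 => dirac e
  | k'.+1 =>
      if (q < n)%N then
        if occ e q then fly k' e q.+1
        else fun f => (1 - b) * dirac (setb e q true) f + b * fly k' e q.+1 f
      else dirac e
  end.

(* Generator (Q-matrix) of the window-restricted HL-PushTASEP with entry of
   particles at site 0 at rate tau. *)
Definition Qrate (tau : R) (e f : config n) : R :=
  \sum_(i : 'I_n | e i) fly n.+1 (setb e i false) i.+1 f
  + tau * fly n.+1 e 0 f
  - (if e == f then (#|[set i | e i]|%:R + tau) else 0).

Definition evolve (tau : R) (v : config n -> R) : config n -> R :=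
  fun f => \sum_(e : config n) v e * Qrate tau e f.

Definition bernoulli_prod (rho : R) : config n -> R :=
  fun e => \prod_(i : 'I_n) (if e i then rho else 1 - rho).

(* k-th term of the series  (law at time t) = mu exp(tQ) *)
Definition law_term (tau t : R) (mu : config n -> R) (k : nat) (f : config n) : R :=
  t ^+ k / (k`!)%:R * iter k (evolve tau) mu f.

End Dyn.

Definition tau_of (R : realType) (b rho : R) : R := rho / ((1 - rho) * (1 - b)).

(* Write nu for the Bernoulli(rho) product measure and tau for tau_of b rho, so that
   tau (1 - b) (1 - rho) = rho.  Let J_q(f) = tau * sum_g nu(g) P[a flying particle about
   to step onto q, added to g, produces f] be the stationary flux of flying particles
   onto site q.  At an empty site the particle stops with probability 1 - b, and
   tau (1 - b) nu(g) = nu(g + delta_q); at an occupied site it is relayed by the particle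
   sitting there.  Hence J_q(f) plus the rate of activations from q equals J_(q+1)(f)
   plus the rate nu(f) [f(q) = 1] at which f is left through q.  Summing these balances
   from the right end of the window, where J(f) = tau nu(f), down to q = 0 gives
   nu Q = 0, so every term of the series nu exp(tQ) but the first vanishes. *)

From Pilot Require Import Defs.
From HB Require Import structures.
From mathcomp Require Import all_boot all_order all_algebra.
From mathcomp Require Import all_classical all_reals all_analysis.
From mathcomp Require Import ring.
Import Order.TTheory GRing.Theory Num.Theory.
Import numFieldNormedType.Exports.
Set Implicit Arguments. Unset Strict Implicit. Unset Printing Implicit Defensive.
Local Open Scope ring_scope.

Lemma sumrD (V : nmodType) (I : Type) (r : seq I) (P : pred I) (F G : I -> V) :
  \sum_(i <- r | P i) (F i + G i) = \sum_(i <- r | P i) F i + \sum_(i <- r | P i) G i.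
Proof. exact: big_split. Qed.

Section Window.
Variable n : nat.

Lemma occ_ord (e : config n) (i : 'I_n) : occ e i = e i.
Proof.
apply/existsP; case: ifP => ei; first by exists i; rewrite eqxx ei.
by case=> j /andP[/eqP/val_inj ->]; rewrite ei.
Qed.

Lemma setbE (e : config n) (q : nat) (v : bool) (j : 'I_n) :
  setb e q v j = if nat_of_ord j == q then v else e j.
Proof. by rewrite ffunE. Qed.

Lemma setbFT (e : config n) (i : 'I_n) : e i -> setb (setb e i false) i true = e.
Proof. by move=> ei; apply/ffunP => j; rewrite !setbE; case: eqP => // /val_inj ->. Qed.

Lemma setbTF (e : config n) (i : 'I_n) : ~~ e i -> setb (setb e i true) i false = e.
Proof.
by move=> ei; apply/ffunP => j; rewrite !setbE; case: eqP => // /val_inj ->; apply/esym/negbTE.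
Qed.

Lemma big_occupied (T : Type) (idx : T) (op : Monoid.com_law idx) (i : 'I_n)
    (F : config n -> T) :
  \big[op/idx]_(e : config n | e i) F e
  = \big[op/idx]_(g : config n | ~~ g i) F (setb g i true).
Proof.
rewrite (reindex_onto (fun g => setb g i true) (fun e => setb e i false)) => [|e ei];
  last exact: setbFT.
apply: eq_bigl => g; rewrite setbE eqxx /=.
case: (boolP (g i)) => gi; last by rewrite setbTF ?eqxx.
by apply/negbTE/eqP => gE; move: gi; rewrite -gE setbE eqxx.
Qed.

Lemma big_ord_geq_recl (V : zmodType) (q : nat) (hq : (q < n)%N) (X : 'I_n -> V) :
  \sum_(i : 'I_n | (q <= i)%N) X i = X (Ordinal hq) + \sum_(i : 'I_n | (q < i)%N) X i.
Proof.
rewrite (bigD1 (Ordinal hq)) //=; congr (_ + _); apply: eq_bigl => i.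
by rewrite ltn_neqAle andbC -val_eqE eq_sym.
Qed.

End Window.

Section Flight.
Variables (R : realType) (b : R) (n : nat).

Lemma flyS (k q : nat) (e : config n) :
  fly b k.+1 e q =
    if (q < n)%N then
      if occ e q then fly b k e q.+1
      else fun f => (1 - b) * Defs.dirac R (setb e q true) f + b * fly b k e q.+1 f
    else Defs.dirac R e.
Proof. by []. Qed.

Lemma fly_fuel (k q : nat) (e : config n) :
  (n <= q + k)%N -> fly b k.+1 e q = fly b k e q.
Proof.
elim: k q => [|k IH] q h; first by rewrite flyS ltnNge -(addn0 q) h.
by rewrite [LHS]flyS [RHS]flyS IH // addSnnS.
Qed.

Lemma fly_step (q : nat) (e : config n) : (q < n)%N ->
  fly b n.+1 e q =
    if occ e q then fly b n.+1 e q.+1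
    else fun f => (1 - b) * Defs.dirac R (setb e q true) f + b * fly b n.+1 e q.+1 f.
Proof. by move=> hq; rewrite flyS hq fly_fuel // leq_addl. Qed.

End Flight.

Lemma bernoulli_prod_fill (R : realType) (n : nat) (rho : R) (g : config n) (i : 'I_n) :
  ~~ g i -> bernoulli_prod rho (setb g i true) * (1 - rho) = rho * bernoulli_prod rho g.
Proof.
move=> gi; rewrite /bernoulli_prod (bigD1 i) //= [in RHS](bigD1 i) //=.
rewrite setbE eqxx (negbTE gi) mulrAC mulrA; congr (_ * _).
by apply: eq_bigr => j ji; rewrite setbE; case: eqP => // /val_inj ji_eq; rewrite ji_eq eqxx in ji.
Qed.

Lemma tau_of_balance (R : realType) (b rho : R) : b < 1 -> rho < 1 ->
  tau_of b rho * (1 - b) * (1 - rho) = rho.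
Proof.
move=> b1 rho1; have b1' : 1 - b != 0 by rewrite subr_eq0 gt_eqF.
have rho1' : 1 - rho != 0 by rewrite subr_eq0 gt_eqF.
by rewrite /tau_of; field; rewrite b1' rho1'.
Qed.

Section Stationarity.
Variables (R : realType) (b rho tau : R) (n : nat).
Hypothesis rho_lt1 : rho < 1.
Hypothesis tau_balance : tau * (1 - b) * (1 - rho) = rho.

Let nu : config n -> R := bernoulli_prod rho.

Lemma bernoulli_prod_fill_tau (g : config n) (i : 'I_n) :
  ~~ g i -> nu (setb g i true) = tau * (1 - b) * nu g.
Proof.
move=> gi; have rho1 : 1 - rho != 0 by rewrite subr_eq0 gt_eqF.
apply: (mulIf rho1); rewrite /nu bernoulli_prod_fill // -{1}tau_balance.
by rewrite [RHS]mulrAC.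
Qed.

Let inflow (q : nat) (f : config n) : R := tau * \sum_(g : config n) nu g * fly b n.+1 g q f.

Let jump_from (i : 'I_n) (f : config n) : R :=
  \sum_(e : config n | e i) nu e * fly b n.+1 (setb e i false) i.+1 f.

Lemma inflow_out (q : nat) (f : config n) : (n <= q)%N -> inflow q f = tau * nu f.
Proof.
move=> nq; rewrite /inflow; congr (_ * _).
rewrite (bigD1 f) // big1 => [|g gf]; rewrite flyS ltnNge nq /= /Defs.dirac.
  by rewrite eqxx mulr1 addr0.
by rewrite eq_sym (negbTE gf) mulr0.
Qed.

Lemma jump_fromE (i : 'I_n) (f : config n) :
  jump_from i f = tau * (1 - b) * \sum_(g : config n | ~~ g i) nu g * fly b n.+1 g i.+1 f.
Proof.
rewrite /jump_from big_occupied mulr_sumr; apply: eq_bigr => g gi.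
by rewrite bernoulli_prod_fill_tau // setbTF // mulrA.
Qed.

Lemma fill_mass (i : 'I_n) (f : config n) :
  tau * (1 - b) * \sum_(g : config n | ~~ g i) nu g * Defs.dirac R (setb g i true) f
  = (f i)%:R * nu f.
Proof.
rewrite mulr_sumr (eq_bigr (fun g => nu (setb g i true) * Defs.dirac R (setb g i true) f));
  last by move=> g gi; rewrite mulrA bernoulli_prod_fill_tau.
rewrite -(big_occupied _ i (fun e => nu e * Defs.dirac R e f)) /Defs.dirac.
case: (boolP (f i)) => fi.
  rewrite (bigD1 f) //= eqxx big1 => [|e /andP[_ ef]]; first by rewrite mulr1 addr0 mul1r.
  by rewrite eq_sym (negbTE ef) mulr0.
rewrite mul0r big1 // => e ei; case: eqP => [fe|]; last by rewrite mulr0.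
by move: fi; rewrite fe ei.
Qed.

Lemma inflow_step (i : 'I_n) (f : config n) :
  inflow i f + jump_from i f = inflow i.+1 f + (f i)%:R * nu f.
Proof.
rewrite jump_fromE -fill_mass /inflow.
rewrite !(bigID (fun g : config n => g i) xpredT) /=.
have occupied : \sum_(g : config n | g i) nu g * fly b n.+1 g i f
    = \sum_(g : config n | g i) nu g * fly b n.+1 g i.+1 f.
  by apply: eq_bigr => g gi; rewrite fly_step // occ_ord gi.
have empty : \sum_(g : config n | ~~ g i) nu g * fly b n.+1 g i f
    = (1 - b) * \sum_(g : config n | ~~ g i) nu g * Defs.dirac R (setb g i true) f
      + b * \sum_(g : config n | ~~ g i) nu g * fly b n.+1 g i.+1 f.
  rewrite !mulr_sumr -sumrD; apply: eq_bigr => g gi.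
  by rewrite fly_step // occ_ord (negbTE gi); ring.
by rewrite occupied empty; ring.
Qed.

Lemma inflow_balance (q : nat) (f : config n) :
  inflow q f + \sum_(i : 'I_n | (q <= i)%N) jump_from i f
  = tau * nu f + \sum_(i : 'I_n | (q <= i)%N) (f i)%:R * nu f.
Proof.
have [m] := ubnP (n - q); elim: m q => // m IH q /ltnSE nqm.
case: (ltnP q n) => [qn|nq]; last first.
  have no_site (X : 'I_n -> R) : \sum_(i : 'I_n | (q <= i)%N) X i = 0.
    by rewrite big_pred0 // => i; apply/negbTE; rewrite -ltnNge (leq_trans (ltn_ord i)).
  by rewrite !no_site inflow_out.
have := inflow_step (Ordinal qn) f => /= step.
have shorter : (n - q.+1 < m)%N by rewrite subnS prednK ?subn_gt0.
rewrite !(big_ord_geq_recl qn) addrA step addrAC IH //; ring.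
Qed.

Lemma sum_jump_from (f : config n) :
  \sum_(e : config n) nu e * \sum_(i : 'I_n | e i) fly b n.+1 (setb e i false) i.+1 f
  = \sum_(i : 'I_n) jump_from i f.
Proof.
under eq_bigr do rewrite mulr_sumr.
by rewrite (exchange_big_dep xpredT).
Qed.

Lemma evolve_bernoulli_prod (f : config n) : evolve b tau nu f = 0.
Proof.
have := inflow_balance 0 f.
have all_sites (X : 'I_n -> R) : \sum_(i : 'I_n | (0 <= i)%N) X i = \sum_i X i.
  exact: eq_bigl.
have card_occupied : \sum_(i : 'I_n) (f i)%:R = #|[set i | f i]|%:R :> R.
  rewrite -sum1_card natr_sum [RHS]big_mkcond; apply: eq_bigr => i _.
  by rewrite inE; case: (f i).
rewrite !all_sites -big_distrl /= card_occupied => balance.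
have diagonal : \sum_(e : config n) nu e * (if e == f then #|[set i | e i]|%:R + tau else 0)
    = nu f * (#|[set i | f i]|%:R + tau).
  by rewrite (bigD1 f) //= eqxx big1 ?addr0 // => e /negbTE ->; rewrite mulr0.
rewrite /evolve /Qrate; under eq_bigr do rewrite mulrBr mulrDr.
have entry : \sum_(e : config n) nu e * (tau * fly b n.+1 e 0 f) = inflow 0 f.
  by rewrite /inflow mulr_sumr; apply: eq_bigr => e _; rewrite mulrCA.
rewrite sumrB sumrD sum_jump_from diagonal entry [_ + inflow 0 f]addrC balance; ring.
Qed.

End Stationarity.

Local Open Scope classical_set_scope.

Section StationarySeries.
Variables (R : realType) (b tau : R) (n : nat) (v : config n -> R).
Hypothesis v_stationary : forall f, evolve b tau v f = 0.

Lemma iter_evolve_stationary (k : nat) (f : config n) : iter k.+1 (evolve b tau) v f = 0.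
Proof.
elim: k f => [|k IH] f; first exact: v_stationary.
by rewrite iterS; apply: big1 => e _; rewrite IH mul0r.
Qed.

Lemma law_series_stationary (t : R) (f : config n) :
  (fun m : nat => \sum_(k < m) law_term b tau t v k f) @ \oo --> v f.
Proof.
apply: cvg_near_cst; exists 1%N => // [[|m]] // _.
rewrite big_ord_recl big1 => [|k _]; last by rewrite /law_term iter_evolve_stationary mulr0.
by rewrite /law_term /= expr0 fact0 divr1 mul1r addr0.
Qed.

End StationarySeries.

Theorem lemma2p13 (R : realType) (b rho : R)
  (hb0 : 0 < b) (hb1 : b < 1) (hr0 : 0 <= rho) (hr1 : rho < 1)
  (n : nat) (t : R) (ht : 0 <= t) (f : config n) :
  (fun m : nat => \sum_(k < m)
      law_term b (tau_of b rho) t (@bernoulli_prod R n rho) k f) @ \oo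
  --> @bernoulli_prod R n rho f.
Proof.
apply: law_series_stationary => g.
exact: evolve_bernoulli_prod hr1 (tau_of_balance hb1 hr1) g.
Qed.
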